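(* (LipSDP-Neuron upper bound for two-layer networks.) Let $W\in\mathbb{R}^{n\times m}$, $u\in\mathbb{R}^{1\times n}$ and real numbers $a\le b$. Suppose $\zeta\ge0$ and $\lambda\in\mathbb{R}^n_+$ are such that, with $T=\mathrm{diag}(\lambda)$, $$\begin{pmatrix}-2ab\,W^TTW-\zeta I_m& (a+b)W^TT\\ (a+b)TW& -2T+u^Tu\end{pmatrix}\preceq 0 .$$ Then $$\sqrt{\zeta}\;\ge\;\max_{y\in[a,b]^n}\big\|W^T\mathrm{diag}(y)u^T\big\|_2 .$$ In particular (with $a=0$, $b=1$) the optimal value of the program $\min\{\sqrt\zeta\}$ subject to these constraints is an upper bound on the $\ell_2$-FGL $\max_{y\in\{0,1\}^n}\|W^T\mathrm{diag}(y)u^T\|_2$ of the ReLU network $x\mapsto u\,\mathrm{ReLU}(Wx)$.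
   Context: $\mathrm{diag}(v)$ is the diagonal matrix with diagonal $v$; $I_m$ is the $m\times m$ identity; $P\preceq0$ means $-P$ is positive semidefinite; $\mathbb{R}_+=[0,\infty)$. *)

From mathcomp Require Import all_boot all_order all_algebra.
Set Implicit Arguments. Unset Strict Implicit. Unset Printing Implicit Defensive.
Import Order.TTheory GRing.Theory Num.Theory.
Local Open Scope ring_scope.

Definition psd (R : realFieldType) (k : nat) (A : 'M[R]_k) : Prop :=
  A^T = A /\ forall x : 'cV[R]_k, 0 <= (x^T *m A *m x) 0 0.

Definition nsd (R : realFieldType) (k : nat) (P : 'M[R]_k) : Prop := psd (- P).

Definition norm2 (R : rcfType) (k : nat) (v : 'cV[R]_k) : R :=
  Num.sqrt (\sum_(i < k) v i 0 ^+ 2).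

Definition lipsdp_mx (R : rcfType) (n m : nat) (W : 'M[R]_(n, m))
  (u : 'rV[R]_n) (a b zeta : R) (lambda : 'rV[R]_n) : 'M[R]_(m + n) :=
  let T := diag_mx lambda in
  block_mx ((- (2 * a * b)) *: (W^T *m T *m W) - zeta%:M) ((a + b) *: (W^T *m T))
           ((a + b) *: (T *m W)) (- (2%:R *: T) + u^T *m u).

From mathcomp Require Import all_boot all_order all_algebra.
From mathcomp Require Import ring lra.
Import Order.TTheory GRing.Theory Num.Theory.
Local Open Scope ring_scope.

(* Test the matrix inequality on x = (g; diag(y) W g) with g = W^T diag(y) u^T.
   The off-diagonal blocks combine with the -2ab and -2T terms into
   -2 sum_i lambda_i (W g)_i^2 (y_i - a)(y_i - b), which is nonnegative since
   y_i lies in [a, b]; the u^T u block contributes (u diag(y) W g)^2 = |g|^4.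
   Hence |g|^4 <= zeta |g|^2, i.e. |g|^2 <= zeta. *)

Lemma nsd_quad_le0 (R : realFieldType) k (P : 'M[R]_k) (x : 'cV[R]_k) :
  nsd P -> (x^T *m P *m x) 0 0 <= 0.
Proof. by move=> [_ /(_ x)]; rewrite mulmxN mulNmx mxE oppr_ge0. Qed.

Lemma quad_form_block_mx (R : pzRingType) m n (A : 'M[R]_m) (B : 'M_(m, n))
    (C : 'M_(n, m)) (D : 'M_n) (p : 'cV_m) (q : 'cV_n) :
  (col_mx p q)^T *m block_mx A B C D *m col_mx p q =
    p^T *m A *m p + p^T *m B *m q + (q^T *m C *m p + q^T *m D *m q).
Proof. by rewrite tr_col_mx mul_row_block mul_row_col !mulmxDl addrACA. Qed.

Lemma bilin_diag_mx (R : comPzSemiRingType) n (p q : 'cV[R]_n) (l : 'rV[R]_n) :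
  (p^T *m (diag_mx l *m q)) 0 0 = \sum_i p i 0 * l 0 i * q i 0.
Proof. by rewrite mxE; apply: eq_bigr => i _; rewrite mul_diag_mx !mxE mulrA. Qed.

Lemma mulmx_trmx_self (R : comPzSemiRingType) n (v : 'cV[R]_n) :
  (v^T *m v) 0 0 = \sum_i v i 0 ^+ 2.
Proof. by rewrite mxE; apply: eq_bigr => i _; rewrite mxE expr2. Qed.

Lemma norm2E (R : rcfType) n (v : 'cV[R]_n) : norm2 v = Num.sqrt ((v^T *m v) 0 0).
Proof. by rewrite mulmx_trmx_self. Qed.

Lemma slope_restriction_quad_form (R : comPzRingType) n (lambda y : 'rV[R]_n)
    (a b : R) (v : 'cV[R]_n) :
  let T := diag_mx lambda in let z := diag_mx y *m v in
  2 * \sum_i lambda 0 i * v i 0 ^+ 2 * ((y 0 i - a) * (y 0 i - b)) =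
    2 * a * b * (v^T *m (T *m v)) 0 0
    - (a + b) * ((v^T *m (T *m z)) 0 0 + (z^T *m (T *m v)) 0 0)
    + 2 * (z^T *m (T *m z)) 0 0.
Proof.
rewrite /= !bilin_diag_mx mulrDr !mulr_sumr opprD -!sumrN -!big_split /=.
by apply: eq_bigr => i _; rewrite mul_diag_mx !mxE; ring.
Qed.

Lemma slope_restriction_sum_le0 (R : realDomainType) n (lambda y : 'rV[R]_n)
    (a b : R) (w : 'cV[R]_n) :
  (forall i, 0 <= lambda 0 i) -> (forall i, a <= y 0 i <= b) ->
  \sum_i lambda 0 i * w i 0 ^+ 2 * ((y 0 i - a) * (y 0 i - b)) <= 0.
Proof.
move=> hl hy; apply: sumr_le0 => i _.
have /andP[hay hyb] := hy i.
apply: mulr_ge0_le0; first by rewrite mulr_ge0 ?sqr_ge0.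
by apply: mulr_ge0_le0; rewrite ?subr_ge0 ?subr_le0.
Qed.

Lemma lipsdp_quad_form (R : rcfType) n m (W : 'M[R]_(n, m)) (u : 'rV[R]_n)
    (a b zeta : R) (lambda y : 'rV[R]_n) (g : 'cV[R]_m) :
  let v := W *m g in
  let z := diag_mx y *m v in
  let x := col_mx g z in
  (x^T *m lipsdp_mx W u a b zeta lambda *m x) 0 0 =
    (u *m z) 0 0 ^+ 2 - zeta * (g^T *m g) 0 0
    - 2 * \sum_i lambda 0 i * v i 0 ^+ 2 * ((y 0 i - a) * (y 0 i - b)).
Proof.
move=> v z x; rewrite /lipsdp_mx quad_form_block_mx.
rewrite !(mulmxBl, mulmxBr, mulmxDl, mulmxDr, mulNmx, mulmxN) -!(scalemxAl, scalemxAr).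
rewrite mul_mx_scalar -scalemxAl.
have tv : g^T *m W^T = v^T by rewrite trmx_mul.
rewrite !mulmxA tv -!mulmxA -/v -/z.
have uz : z^T *m (u^T *m (u *m z)) = (u *m z)^T *m (u *m z).
  by rewrite [in RHS]trmx_mul mulmxA.
(* Through [trace_mx11], the entry map of 1x1 matrices becomes the linear [\tr]. *)
rewrite uz -!scaleNr -[LHS]trace_mx11 !(mxtraceD, mxtraceZ) /= !trace_mx11.
rewrite slope_restriction_quad_form -/z (@mulmx_trmx_self _ _ (u *m z)) big_ord1; ring.
Qed.

Lemma trmx_diag_sandwich (R : comPzRingType) n m (W : 'M[R]_(n, m))
    (y u : 'rV[R]_n) :
  (W^T *m diag_mx y *m u^T)^T = u *m diag_mx y *m W.
Proof. by rewrite !trmx_mul tr_diag_mx !trmxK mulmxA. Qed.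

Lemma le_of_sqr_le_mul (R : realDomainType) (x c : R) :
  0 <= x -> 0 <= c -> x ^+ 2 <= c * x -> x <= c.
Proof.
move=> x0 c0; have [-> // | xn0] := eqVneq x 0.
by rewrite expr2 ler_pM2r // lt_def xn0.
Qed.

Theorem mainTheorem8 (R : rcfType) (n m : nat) (W : 'M[R]_(n, m))
  (u : 'rV[R]_n) (a b zeta : R) (lambda : 'rV[R]_n) :
  a <= b -> 0 <= zeta -> (forall i, 0 <= lambda 0 i) ->
  nsd (lipsdp_mx W u a b zeta lambda) ->
  forall y : 'rV[R]_n, (forall i, a <= y 0 i <= b) ->
    norm2 (W^T *m diag_mx y *m u^T) <= Num.sqrt zeta.
Proof.
move=> _ zeta0 lambda0 nsdP y hy; set g := W^T *m diag_mx y *m u^T.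
have := @nsd_quad_le0 _ _ _ (col_mx g (diag_mx y *m (W *m g))) nsdP.
have ug : u *m (diag_mx y *m (W *m g)) = g^T *m g.
  by rewrite 2![LHS]mulmxA -trmx_diag_sandwich.
rewrite lipsdp_quad_form ug.
have := @slope_restriction_sum_le0 _ _ _ _ _ _ (W *m g) lambda0 hy.
have gg0 : 0 <= (g^T *m g) 0 0.
  by rewrite mulmx_trmx_self sumr_ge0 // => i _; rewrite sqr_ge0.
rewrite norm2E ler_sqrt //.
move: ((g^T *m g) 0 0) gg0 => N N0 S0 hQ.
apply: le_of_sqr_le_mul N0 zeta0 _.
lra.
Qed.
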